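(* Let $G$ be a discrete-time LTI system with $m$ inputs and $p$ outputs whose minimal realizations have state dimension $n$. Let $L\ge n$ and $\xi\in\mathbb{N}$, $\xi\ge1$, be integers, and set $\tilde L=\xi L+(1-\xi)n$. Suppose $\{u_k,y_k\}_{k=0}^{N-1}$ is a trajectory of $G$ and $u$ is persistently exciting of order $L+n$. Then $\{\bar u_k,\bar y_k\}_{k=0}^{\tilde L-1}$ is a trajectory of $G$ if and only if there exist $\alpha^1,\dots,\alpha^\xi\in\mathbb{R}^{N-L+1}$ such that $$\begin{bmatrix}H_L(u)&0\\0&I_{\xi-1}\otimes H_{L-n}(u_{[n,N-1]})\\ H_L(y)&0\\0&I_{\xi-1}\otimes H_{L-n}(y_{[n,N-1]})\end{bmatrix}\begin{bmatrix}\alpha^1\\ \vdots\\ \alpha^\xi\end{bmatrix}=\begin{bmatrix}\bar u_{[0,\tilde L-1]}\\ \bar y_{[0,\tilde L-1]}\end{bmatrix}$$ and, for all $i\in\{1,\dots,\xi-1\}$, $$H_n(u_{[L-n,N-1]})\alpha^i=H_n(u_{[0,N-L+n-1]})\alpha^{i+1},\qquad H_n(y_{[L-n,N-1]})\alpha^i=H_n(y_{[0,N-L+n-1]})\alpha^{i+1}.$$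
   Context: For a sequence $\{x_k\}_{k=0}^{N-1}$ with $x_k\in\mathbb{R}^d$ and $1\le L\le N$, the Hankel matrix $H_L(x)\in\mathbb{R}^{dL\times(N-L+1)}$ is the matrix whose $(i,j)$ block (block rows $i=0,\dots,L-1$, columns $j=0,\dots,N-L$) is $x_{i+j}$. For $a\le b$, $x_{[a,b]}$ denotes the stacked vector $(x_a^\top,\dots,x_b^\top)^\top$; when used as the argument of a Hankel matrix, $x_{[a,b]}$ denotes the subsequence $\{x_{a+k}\}_{k=0}^{b-a}$, so that e.g. $H_{L-n}(u_{[n,N-1]})$, $H_n(u_{[L-n,N-1]})$ and $H_n(u_{[0,N-L+n-1]})$ all have $N-L+1$ columns. $\otimes$ is the Kronecker product and $I_{\xi-1}$ the identity of size $\xi-1$ (the corresponding block is absent if $\xi=1$). A sequence $x$ with $x_k\in\mathbb{R}^d$ is persistently exciting of order $L$ if $\operatorname{rank}H_L(x)=dL$. An input-output sequence $\{u_k,y_k\}_{k=0}^{N-1}$ is a trajectory of $G$ if for a minimal realization $(A,B,C,D)$ of $G$ there exist $\bar x\in\mathbb{R}^n$ and states $\{x_k\}_{k=0}^N$ with $x_0=\bar x$, $x_{k+1}=Ax_k+Bu_k$, $y_k=Cx_k+Du_k$ for $k=0,\dots,N-1$. *)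

From HB Require Import structures.
From mathcomp Require Import all_boot all_order all_algebra.
Set Implicit Arguments. Unset Strict Implicit. Unset Printing Implicit Defensive.
Import Order.TTheory GRing.Theory Num.Theory.
Local Open Scope ring_scope.

(* Stacked vector x_{[a, a+len-1]} = (x_a^T, ..., x_{a+len-1}^T)^T, of size len*d.
   (mxvec is row-major: entry (i,k) of the len x d matrix goes to index i*d+k.) *)
Definition stackv (R : Type) (d : nat) (x : nat -> 'cV[R]_d) (a len : nat)
  : 'cV[R]_(len * d) :=
  (mxvec (\matrix_(i < len, k < d) x (a + i)%N k ord0))^T.

(* Hankel matrix with L block rows and K columns: block (i,j) is x_{i+j};
   i.e. column j is the stacked vector x_{[j, j+L-1]}.
   H_L(x) for a sequence of length N is hankel x L (N - L + 1). *)
Definition hankel (R : Type) (d : nat) (x : nat -> 'cV[R]_d) (L K : nat)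
  : 'M[R]_(L * d, K) :=
  \matrix_(r < L * d, j < K) stackv x j L r ord0.

Definition ctrb (R : pzRingType) (n m : nat) (A : 'M[R]_n) (B : 'M[R]_(n, m)) :=
  \mxrow_(i < n) (A ^+ i *m B).
Definition obsv (R : pzRingType) (n p : nat) (A : 'M[R]_n) (C : 'M[R]_(p, n)) :=
  \mxcol_(i < n) (C *m A ^+ i).

Definition minimal_realization (R : fieldType) (n m p : nat)
  (A : 'M[R]_n) (B : 'M[R]_(n, m)) (C : 'M[R]_(p, n)) (D : 'M[R]_(p, m)) : Prop :=
  \rank (ctrb A B) = n /\ \rank (obsv A C) = n.

Definition is_trajectory (R : pzRingType) (n m p : nat)
  (A : 'M[R]_n) (B : 'M[R]_(n, m)) (C : 'M[R]_(p, n)) (D : 'M[R]_(p, m))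
  (N : nat) (u : nat -> 'cV[R]_m) (y : nat -> 'cV[R]_p) : Prop :=
  exists x : nat -> 'cV[R]_n,
    forall k, (k < N)%N ->
      x k.+1 = A *m x k + B *m u k /\ y k = C *m x k + D *m u k.

Definition persistently_exciting (R : fieldType) (d : nat) (x : nat -> 'cV[R]_d)
  (N L : nat) : Prop :=
  \rank (hankel x L (N - L + 1)) = (L * d)%N.

From HB Require Import structures.
From mathcomp Require Import all_boot all_order all_algebra zify.
Set Implicit Arguments. Unset Strict Implicit. Unset Printing Implicit Defensive.
Import Order.TTheory GRing.Theory Num.Theory.
Local Open Scope ring_scope.

(* Write s = L - n and split a candidate trajectory (ubar, ybar) of length
   L + (xi-1)s into xi windows of length L starting at the times i*s, so that
   consecutive windows overlap on n samples.  The block equations of the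
   proposition say exactly that the i-th window of (ubar, ybar) equals
   comb (u, y) alpha^i, the combination with weights alpha^i of the length-L
   windows of the data (hankel_windowsP, from the purely combinatorial
   block_windowsP).  The theorem thus reduces to trajectory_windowsP:
   - (=>) By the fundamental lemma of Willems et al. (fundamental_left_kernel),
     persistency of excitation of order L + n and controllability make the data
     matrix [x_0 .. x_{N-L}; H_L(u)] row-free, so any initial state and any
     inputs on a window are reproduced by some alpha (window_coefP); the outputs
     then agree because combinations of data windows are trajectories
     (comb_traj) and states are determined by initial state and inputs.
   - (<=) Each alpha^i yields a trajectory on window i; on the overlap two
     consecutive windows have equal inputs and outputs, hence by observability
     (traj_observed) equal states, and the windows glue (glue_windows). *)

(* A sequence g of length L + (xi-1)(L-n) is covered by xi windows of length L
   and stride L - n, consecutive windows overlapping on n samples. *)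
Lemma block_windowsP T (f : nat -> nat -> T) (g : nat -> T) n L xi :
  (n <= L)%N -> (1 <= xi)%N ->
  [/\ forall t, (t < L)%N -> f 0%N t = g t,
      forall i, (1 <= i < xi)%N -> forall t, (t < L - n)%N ->
        f i (n + t)%N = g (L + (i - 1) * (L - n) + t)%N &
      forall i, (i.+1 < xi)%N -> forall t, (t < n)%N -> f i (L - n + t)%N = f i.+1 t]
  <-> forall i t, (i < xi)%N -> (t < L)%N -> f i t = g (i * (L - n) + t)%N.
Proof.
move=> hnL hxi; split=> [[hfirst hlast hoverlap]|hw]; last first.
  split=> [t ht|i /andP[hi1 hi] t ht|i hi t ht].
  - by rewrite hw.
  - rewrite hw //; last by lia.
    by congr g; case: i hi1 hi => // i _ _; rewrite subSS subn0 mulSn; lia.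
  - by rewrite !hw; [congr g; rewrite mulSn | ..]; lia.
elim=> [|i IH] t hi ht; first by rewrite hfirst.
have [htn|hnt] := ltnP t n.
  rewrite -hoverlap // IH; [congr g; rewrite mulSn | |]; lia.
have -> : t = (n + (t - n))%N by lia.
rewrite hlast; [congr g; rewrite subSS subn0 mulSn | |]; lia.
Qed.

Section HankelCombinations.
Variable R : fieldType.

(* comb x al t = \sum_j al_j x_{j+t}: the sequence H(x) al, read sample by
   sample; it is the combination, with weights al, of the shifted copies of x. *)
Definition comb d K (x : nat -> 'cV[R]_d) (al : 'cV[R]_K) (t : nat) : 'cV[R]_d :=
  \sum_(j < K) al j 0 *: x (j + t)%N.

Lemma comb_shift d K (x : nat -> 'cV[R]_d) (al : 'cV[R]_K) s t :
  comb (fun k => x (s + k)%N) al t = comb x al (s + t).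
Proof. by apply: eq_bigr => j _; rewrite addnCA. Qed.

Lemma stackvE d (x : nat -> 'cV[R]_d) a len (i : 'I_len) (k : 'I_d) c :
  stackv x a len (mxvec_index i k) c = x (a + i)%N k c.
Proof. by rewrite /stackv mxE (ord1 c) mxvecE mxE. Qed.

Lemma stackv_eqP d (f g : nat -> 'cV[R]_d) a b len :
  stackv f a len = stackv g b len <->
  forall i, (i < len)%N -> f (a + i)%N = g (b + i)%N.
Proof.
split=> [E i hi|E].
  apply/matrixP => k c; rewrite (ord1 c).
  have := congr1 (fun M : 'cV_(len * d) => M (mxvec_index (Ordinal hi) k) ord0) E.
  by rewrite !stackvE.
apply/matrixP => r c; rewrite (ord1 c).
by case/mxvec_indexP: r => i k; rewrite !stackvE (E i (ltn_ord i)).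
Qed.

Lemma hankel_mul d (x : nat -> 'cV[R]_d) L K (al : 'cV[R]_K) :
  hankel x L K *m al = stackv (comb x al) 0 L.
Proof.
apply/matrixP => r c; rewrite (ord1 c).
case/mxvec_indexP: r => i k; rewrite stackvE !mxE /comb summxE.
by apply: eq_bigr => j _; rewrite mxE stackvE mxE add0n mulrC.
Qed.

Lemma hankel_mulP d (x g : nat -> 'cV[R]_d) L K (al : 'cV[R]_K) a :
  hankel x L K *m al = stackv g a L <->
  forall t, (t < L)%N -> comb x al t = g (a + t)%N.
Proof. by rewrite hankel_mul; apply: iff_trans (stackv_eqP _ _ _ _ _) _. Qed.

Lemma hankel_mul_eqP d (x x' : nat -> 'cV[R]_d) L K (al al' : 'cV[R]_K) :
  hankel x L K *m al = hankel x' L K *m al' <->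
  forall t, (t < L)%N -> comb x al t = comb x' al' t.
Proof.
by rewrite !hankel_mul; apply: iff_trans (stackv_eqP _ _ _ _ _) _.
Qed.

Definition rstack d L (f : 'I_L -> 'rV[R]_d) : 'rV[R]_(L * d) :=
  mxvec (\matrix_(i, k) f i 0 k).

Lemma rstack_dot d L (f : 'I_L -> 'rV[R]_d) (g : nat -> 'cV[R]_d) a :
  rstack f *m stackv g a L = \sum_(i < L) f i *m g (a + i)%N.
Proof.
apply/matrixP => i0 j0; rewrite (ord1 i0) (ord1 j0) mxE summxE.
rewrite (reindex _ (curry_mxvec_bij _ _)) /=.
rewrite [RHS](eq_bigr (fun i => \sum_(k < d) f i 0 k * g (a + i)%N k 0)); last first.
  by move=> i _; rewrite mxE.
rewrite pair_bigA /=; apply: eq_bigr => [[i k]] _ /=.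
by rewrite /rstack mxvecE mxE stackvE.
Qed.

Lemma rstackK d L (w : 'rV[R]_(L * d)) : w = rstack (fun i => row i (vec_mx w)).
Proof.
rewrite /rstack -[w in LHS]vec_mxK; congr mxvec; apply/matrixP => i k.
by rewrite !mxE.
Qed.

Lemma rstack_eq0 d L (f : 'I_L -> 'rV[R]_d) : rstack f = 0 -> forall i, f i = 0.
Proof.
move=> /eqP; rewrite /rstack mxvec_eq0 => /eqP /matrixP H i.
by apply/rowP => k; have := H i k; rewrite !mxE.
Qed.

Lemma hankel_col d (x : nat -> 'cV[R]_d) L K (w : 'rV[R]_(L * d)) (j : 'I_K) :
  (w *m hankel x L K) 0 j = (w *m stackv x j L) 0 0.
Proof. by rewrite !mxE; apply: eq_bigr => r _; rewrite !mxE. Qed.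

Lemma pe_left_kernel d (x : nat -> 'cV[R]_d) N L (w : nat -> 'rV[R]_d) :
  persistently_exciting x N L ->
  (forall j, (j <= N - L)%N -> \sum_(s < L) w s *m x (j + s)%N = 0) ->
  forall s, (s < L)%N -> w s = 0.
Proof.
move=> hpe hw s hs.
have hfree : row_free (hankel x L (N - L + 1)) by rewrite /row_free hpe.
have : rstack (fun s : 'I_L => w s) *m hankel x L (N - L + 1) = 0.
  apply/rowP => j; rewrite hankel_col rstack_dot hw ?mxE //.
  by have := ltn_ord j; lia.
by move/eqP; rewrite mulmx_free_eq0 // => /eqP /rstack_eq0 /(_ (Ordinal hs)).
Qed.

Lemma hankel_windowsP d (z g : nat -> 'cV[R]_d) n L K xi (alpha : nat -> 'cV[R]_K) :
  (n <= L)%N -> (1 <= xi)%N ->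
  [/\ hankel z L K *m alpha 0%N = stackv g 0 L,
      forall i, (1 <= i < xi)%N ->
        hankel (fun k => z (n + k)%N) (L - n) K *m alpha i
          = stackv g (L + (i - 1) * (L - n)) (L - n) &
      forall i, (i.+1 < xi)%N ->
        hankel (fun k => z (L - n + k)%N) n K *m alpha i = hankel z n K *m alpha i.+1]
  <-> forall i t, (i < xi)%N -> (t < L)%N -> comb z (alpha i) t = g (i * (L - n) + t)%N.
Proof.
move=> hnL hxi; apply: iff_trans (block_windowsP (fun i => comb z (alpha i)) g hnL hxi).
have E0 := hankel_mulP z g L (alpha 0%N) 0.
have E1 i := hankel_mulP (fun k => z (n + k)%N) g (L - n) (alpha i) (L + (i - 1) * (L - n)).
have E2 i := hankel_mul_eqP (fun k => z (L - n + k)%N) z n (alpha i) (alpha i.+1).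
split=> [[/E0 h0 h1 h2]|[h0 h1 h2]]; split.
- exact: h0.
- by move=> i hi t ht; rewrite -comb_shift; exact: (E1 i).1 (h1 i hi) t ht.
- by move=> i hi t ht; rewrite -comb_shift; exact: (E2 i).1 (h2 i hi) t ht.
- by apply/E0 => t ht; exact: h0.
- by move=> i hi; apply/E1 => t ht; rewrite comb_shift; exact: h1.
- by move=> i hi; apply/E2 => t ht; rewrite comb_shift; exact: h2.
Qed.

End HankelCombinations.
Section LinearSystem.
Variables (R : fieldType) (n m p : nat) (A : 'M[R]_n) (B : 'M[R]_(n, m))
  (C : 'M[R]_(p, n)) (D : 'M[R]_(p, m)).

Definition state_eq T (x : nat -> 'cV[R]_n) (u : nat -> 'cV[R]_m) : Prop :=
  forall k, (k < T)%N -> x k.+1 = A *m x k + B *m u k.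

Definition traj_on T (x : nat -> 'cV[R]_n) (u : nat -> 'cV[R]_m)
    (y : nat -> 'cV[R]_p) : Prop :=
  forall k, (k < T)%N -> x k.+1 = A *m x k + B *m u k /\ y k = C *m x k + D *m u k.

Lemma traj_on_state T x u y : traj_on T x u y -> state_eq T x u.
Proof. by move=> h k hk; case: (h k hk). Qed.

Lemma traj_on_shift T x u y a T' : (a + T' <= T)%N -> traj_on T x u y ->
  traj_on T' (fun k => x (a + k)%N) (fun k => u (a + k)%N) (fun k => y (a + k)%N).
Proof. by move=> hT h k hk; rewrite addnS; apply: h; lia. Qed.

Lemma state_expand T x u j k : state_eq T x u -> (j + k <= T)%N ->
  x (j + k)%N = A ^+ k *m x j + \sum_(s < k) A ^+ (k.-1 - s) *m B *m u (j + s)%N.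
Proof.
move=> htr; elim: k => [|k IH] hjk.
  by rewrite addn0 expr0 mul1mx big_ord0 addr0.
rewrite addnS htr; last by lia.
rewrite IH; last by lia.
rewrite big_ord_recr /= subnn expr0 mul1mx mulmxDr mulmxA exprS -addrA.
congr (_ + (_ + _)); rewrite mulmx_sumr; apply: eq_bigr => s _ /=.
rewrite !mulmxA -[A *m _](exprS A).
by have hs := ltn_ord s; have -> : (k - s = (k.-1 - s).+1)%N by lia.
Qed.

Lemma state_determined T z w z' w' : state_eq T z w -> state_eq T z' w' ->
  z 0%N = z' 0%N -> (forall t, (t < T)%N -> w t = w' t) ->
  forall t, (t <= T)%N -> z t = z' t.
Proof.
move=> hz hz' h0 hw; elim=> [|t IH] ht //.
by rewrite hz // hz' // IH ?hw // ltnW.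
Qed.

Lemma ctrb_left_kernel (hc : \rank (ctrb A B) = n) (xi : 'rV[R]_n) :
  (forall r, (r < n)%N -> xi *m A ^+ r *m B = 0) -> xi = 0.
Proof.
move=> hxi; have hfree : row_free (ctrb A B) by rewrite /row_free hc.
apply/eqP; rewrite -(mulmx_free_eq0 _ hfree) /ctrb mul_mxrow.
have -> : \mxrow_i (xi *m (A ^+ i *m B)) = \mxrow_(i < n) (0 : 'rV[R]_m).
  by apply/eq_mxrowP => i; rewrite mulmxA hxi.
by rewrite mxrow0.
Qed.

Lemma obsv_kernel (ho : \rank (obsv A C) = n) (e : 'cV[R]_n) :
  (forall t, (t < n)%N -> C *m (A ^+ t *m e) = 0) -> e = 0.
Proof.
move=> he; have hfull : row_full (obsv A C) by rewrite /row_full ho.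
apply: (row_full_inj hfull); rewrite mulmx0 /obsv mxcol_mul.
have -> : \mxcol_i (C *m A ^+ i *m e) = \mxcol_(i < n) (0 : 'M[R]_(p, 1)).
  by apply/eq_mxcolP => i; rewrite -mulmxA he.
by rewrite mxcol0.
Qed.

Lemma traj_observed (ho : \rank (obsv A C) = n) z w v z' w' v' :
  traj_on n z w v -> traj_on n z' w' v' ->
  (forall t, (t < n)%N -> w t = w' t) -> (forall t, (t < n)%N -> v t = v' t) ->
  z 0%N = z' 0%N.
Proof.
move=> hz hz' hw hv; apply/eqP; rewrite -subr_eq0; apply/eqP.
pose e t := z t - z' t.
have he t : (t <= n)%N -> e t = A ^+ t *m e 0%N.
  elim: t => [|t IH] ht; first by rewrite expr0 mul1mx.
  rewrite /e (hz t ht).1 (hz' t ht).1 hw // opprD addrACA -mulmxBr subrr addr0.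
  by rewrite -/(e t) IH ?(ltnW ht) // exprS mulmxA.
apply: (obsv_kernel ho) => t ht.
rewrite -he ?(ltnW ht) // /e mulmxBr.
have := hv t ht; rewrite (hz t ht).2 (hz' t ht).2 hw // => /addIr ->.
exact: subrr.
Qed.

Lemma comb_traj N L K x u y (al : 'cV[R]_K) : (K + L <= N.+1)%N ->
  traj_on N x u y -> traj_on L (comb x al) (comb u al) (comb y al).
Proof.
move=> hKL htraj t ht; rewrite /comb !mulmx_sumr -!big_split.
split; apply: eq_bigr => j _; have hj := ltn_ord j;
  have [h1 h2] := htraj (j + t)%N ltac:(lia);
  by rewrite ?[(j + t.+1)%N]addnS ?h1 ?h2 scalerDr -!scalemxAr.
Qed.

End LinearSystem.

Lemma monic_annihilating_coef (R : fieldType) n (A : 'M[R]_n) :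
  exists c : nat -> R, c n = 1 /\ \sum_(k < n.+1) c k *: A ^+ k = 0.
Proof.
case: n A => [|n] A; first by exists (fun _ => 1); split => //; rewrite flatmx0.
exists (fun k => (char_poly A)`_k); split.
  by have := char_poly_monic A; rewrite monicE /lead_coef size_char_poly => /eqP.
rewrite -[RHS](Cayley_Hamilton A) -{2}[char_poly A]coefK poly_def size_char_poly.
rewrite linear_sum; apply: eq_bigr => i _.
by rewrite linearZ /= rmorphXn /= horner_mx_X.
Qed.

Section FundamentalLemma.
Variables (R : fieldType) (n m N L : nat) (A : 'M[R]_n) (B : 'M[R]_(n, m))
  (x : nat -> 'cV[R]_n) (u : nat -> 'cV[R]_m).
Hypotheses (htr : state_eq A B N x u) (hc : \rank (ctrb A B) = n)
  (hN : (L + n <= N)%N) (hpe : persistently_exciting u N (L + n)).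

Section LeftKernel.
Variables (xi : 'rV[R]_n) (eta : nat -> 'rV[R]_m) (c : nat -> R).
Hypotheses (heta : forall t, (L <= t)%N -> eta t = 0)
  (hk : forall j, (j <= N - L)%N -> xi *m x j + \sum_(t < L) eta t *m u (j + t)%N = 0)
  (hcn : c n = 1) (hcA : \sum_(k < n.+1) c k *: A ^+ k = 0).

(* Coefficient of u_{j+s} in the relation at time j+k rewritten in terms of x_j. *)
Definition shifted_coef k s : 'rV[R]_m :=
  if (s < k)%N then xi *m A ^+ (k.-1 - s) *m B else eta (s - k)%N.

Lemma shifted_relation j k : (k <= n)%N -> (j + k <= N - L)%N ->
  xi *m (A ^+ k *m x j) + \sum_(s < L + n) shifted_coef k s *m u (j + s)%N = 0.
Proof.
move=> hkn hjk.
rewrite -[RHS](hk hjk) (state_expand htr); last by lia.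
rewrite mulmxDr -addrA; congr (_ + _).
rewrite -(big_mkord xpredT (fun s => shifted_coef k s *m u (j + s)%N)).
rewrite (@big_cat_nat _ _ _ k 0 (L + n)) //=; last by lia.
rewrite big_mkord mulmx_sumr; congr (_ + _).
  by apply: eq_bigr => s _; rewrite /shifted_coef ltn_ord !mulmxA.
rewrite -{1}[k]add0n big_addn (@big_cat_nat _ _ _ L 0 (L + n - k)) //=; last by lia.
rewrite [X in _ + X]big1_seq ?addr0; last first.
  move=> t /andP[_]; rewrite mem_index_iota => /andP[hLt _].
  by rewrite /shifted_coef ltnNge leq_addl /= addnK heta // mul0mx.
rewrite big_mkord; apply: eq_bigr => t _.
by rewrite /shifted_coef ltnNge leq_addl /= addnK (addnC t) addnA.
Qed.

(* Combining the shifted relations with the Cayley-Hamilton coefficients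
   eliminates the state: W annihilates every window of length L + n of u. *)
Definition annihilator s : 'rV[R]_m := \sum_(k < n.+1) c k *: shifted_coef k s.

Lemma annihilator_vanishes s : (s < L + n)%N -> annihilator s = 0.
Proof.
apply: (pe_left_kernel hpe) => j hj.
have rel (k : 'I_n.+1) : \sum_(s < L + n) shifted_coef k s *m u (j + s)%N =
    - (xi *m (A ^+ k *m x j)).
  apply/eqP; rewrite -addr_eq0 addrC shifted_relation //;
    by have := ltn_ord k; lia.
transitivity (\sum_(k < n.+1) c k *: \sum_(s < L + n) shifted_coef k s *m u (j + s)%N).
  under eq_bigr => i _ do rewrite /annihilator mulmx_suml.
  rewrite exchange_big; apply: eq_bigr => k _.
  by rewrite scaler_sumr; apply: eq_bigr => i _; rewrite scalemxAl.
under eq_bigr => k _ do rewrite rel scalerN scalemxAr scalemxAl mulmxA.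
by rewrite sumrN -mulmx_suml -mulmx_sumr hcA mulmx0 mul0mx oppr0.
Qed.

Lemma eta_vanishes t : eta t = 0.
Proof.
suff vanish r : forall t, (L - r <= t)%N -> eta t = 0 by apply: (vanish L); lia.
elim: r => [|r IH] {}t ht; first by apply: heta; lia.
have [ht'|ht'] := leqP (L - r) t; first exact: IH.
have hs : (t + n < L + n)%N by lia.
have := annihilator_vanishes hs; rewrite /annihilator big_ord_recr /= hcn scale1r.
rewrite {2}/shifted_coef ltnNge leq_addl addnK big1 ?add0r // => k _.
have hkn := ltn_ord k; rewrite /shifted_coef ltnNge.
by rewrite (_ : (k <= t + n)%N) /= ?IH ?scaler0 //; lia.
Qed.

Lemma xi_AB_vanishes r : (r < n)%N -> xi *m A ^+ r *m B = 0.
Proof.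
elim/ltn_ind: r => r IH hr.
have hs : (n.-1 - r < L + n)%N by lia.
have := annihilator_vanishes hs; rewrite /annihilator big_ord_recr /= hcn scale1r.
rewrite {2}/shifted_coef ifT; last by lia.
rewrite (_ : n.-1 - (n.-1 - r) = r)%N; last by lia.
rewrite big1 ?add0r // => k _; rewrite /shifted_coef.
case: ifP => hkr; last by rewrite eta_vanishes scaler0.
by rewrite IH ?scaler0 //; have := ltn_ord k; lia.
Qed.

End LeftKernel.

Lemma fundamental_left_kernel (xi : 'rV[R]_n) (eta : nat -> 'rV[R]_m) :
  (forall t, (L <= t)%N -> eta t = 0) ->
  (forall j, (j <= N - L)%N -> xi *m x j + \sum_(t < L) eta t *m u (j + t)%N = 0) ->
  xi = 0 /\ forall t, eta t = 0.
Proof.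
move=> heta hk; have [c [hcn hcA]] := monic_annihilating_coef A.
split; last exact: eta_vanishes heta hk hcn hcA.
exact/(ctrb_left_kernel hc)/(xi_AB_vanishes heta hk hcn hcA).
Qed.

Definition state_matrix K : 'M[R]_(n, K) := \matrix_(i < n, j < K) x j i 0.

Definition data_matrix : 'M[R]_(n + L * m, N - L + 1) :=
  col_mx (state_matrix (N - L + 1)) (hankel u L (N - L + 1)).

Lemma data_matrix_row_free : row_free data_matrix.
Proof.
apply: inj_row_free => w; rewrite -[w]hsubmxK mul_row_col.
move: (lsubmx w) (rsubmx w) => xi w2 hw.
pose eta t := if insub t is Some i then row (i : 'I_L) (vec_mx w2) else 0.
have heta t : (L <= t)%N -> eta t = 0 by move=> ht; rewrite /eta insubF // ltnNge ht.
have hk j : (j <= N - L)%N -> xi *m x j + \sum_(t < L) eta t *m u (j + t)%N = 0.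
  move=> hj; have hjK : (j < N - L + 1)%N by lia.
  have := congr1 (fun Z : 'M[R]_(1, N - L + 1) => Z 0 (Ordinal hjK)) hw.
  rewrite mxE hankel_col [X in _ = X -> _]mxE {1}[w2]rstackK rstack_dot => e.
  apply/matrixP => a b; rewrite (ord1 a) (ord1 b) [RHS]mxE mxE -[RHS]e.
  congr (_ + _); first by rewrite !mxE; apply: eq_bigr => r _; rewrite !mxE.
  by rewrite !summxE; apply: eq_bigr => i _; rewrite /eta valK.
have [-> heta0] := fundamental_left_kernel heta hk.
suff -> : w2 = 0 by rewrite row_mx0.
rewrite [w2]rstackK; apply/eqP; rewrite /rstack mxvec_eq0; apply/eqP/matrixP => i k.
by have := heta0 i; rewrite /eta valK !mxE => /rowP /(_ k); rewrite !mxE.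
Qed.

(* Coefficients of a combination of data windows starting from the state x0 and
   driven by the inputs v on [0, L); they exist by row-freeness of the data matrix. *)
Definition window_coef (x0 : 'cV[R]_n) (v : nat -> 'cV[R]_m) : 'cV[R]_(N - L + 1) :=
  (pinvmx data_matrix^T)^T *m col_mx x0 (stackv v 0 L).

Lemma window_coefP x0 v :
  comb x (window_coef x0 v) 0 = x0 /\
  forall t, (t < L)%N -> comb u (window_coef x0 v) t = v t.
Proof.
pose b := col_mx x0 (stackv v 0 L).
have hfull : row_full data_matrix^T.
  by rewrite /row_full mxrank_tr; exact: data_matrix_row_free.
have : data_matrix *m window_coef x0 v = b.
  have := mulmxKpV (submx_full b^T hfull); rewrite /window_coef.
  by move: (pinvmx _) => P hP; rewrite -[RHS]trmxK -hP !trmx_mul !trmxK.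
rewrite mul_col_mx => /eq_col_mx [hx hu]; split.
  rewrite -[RHS]hx; apply/matrixP => i c; rewrite (ord1 c) !mxE summxE.
  by apply: eq_bigr => j _; rewrite !mxE addn0 mulrC.
by move=> t ht; have /hankel_mulP := hu; move/(_ t ht).
Qed.

End FundamentalLemma.

Lemma cover_index n L xi k : (n <= L)%N -> (1 <= xi)%N ->
  (k < L + (xi - 1) * (L - n))%N ->
  exists i t, [/\ (i < xi)%N, (t < L)%N & k = (i * (L - n) + t)%N].
Proof.
move=> hnL hxi hk; have [hkL|hLk] := ltnP k L; first by exists 0%N, k.
have hs : (0 < L - n)%N.
  by rewrite lt0n; apply/negP => /eqP hs0; move: hk; rewrite hs0 muln0; lia.
exists ((k - n) %/ (L - n))%N, (k - (k - n) %/ (L - n) * (L - n))%N.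
have lo := leq_divM (k - n) (L - n); have hi := ltn_ceil (k - n) hs.
rewrite mulSn in hi; split; try lia.
rewrite ltn_divLR //; move: hk; case: (xi) hxi => // xi' _; rewrite subSS subn0 mulSn.
lia.
Qed.

Section Windows.
Variables (R : fieldType) (n m p L xi : nat) (A : 'M[R]_n) (B : 'M[R]_(n, m))
  (C : 'M[R]_(p, n)) (D : 'M[R]_(p, m)).
Hypotheses (hnL : (n <= L)%N) (hxi : (1 <= xi)%N).

Local Notation start i := (i * (L - n))%N.

Lemma window_in_range i t : (i < xi)%N -> (t <= L)%N ->
  (start i + t <= L + (xi - 1) * (L - n))%N.
Proof.
move=> hi ht; have : (i * (L - n) <= (xi - 1) * (L - n))%N by apply: leq_mul; lia.
lia.
Qed.

Lemma window_outputs xb ubar ybar xw uw yw :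
  traj_on A B C D (L + (xi - 1) * (L - n)) xb ubar ybar ->
  (forall i, (i < xi)%N -> traj_on A B C D L (xw i) (uw i) (yw i)) ->
  (forall i, (i < xi)%N -> xw i 0%N = xb (start i)) ->
  (forall i t, (i < xi)%N -> (t < L)%N -> uw i t = ubar (start i + t)%N) ->
  forall i t, (i < xi)%N -> (t < L)%N -> yw i t = ybar (start i + t)%N.
Proof.
move=> hb hw h0 hu i t hi ht.
have hbi := traj_on_shift (window_in_range hi (leqnn L)) hb.
have hx := state_determined (traj_on_state (hw i hi)) (traj_on_state hbi).
rewrite ((hw i hi) t ht).2 ((hbi t ht).2) hx ?hu ?addn0 ?h0 //; last exact: ltnW.
by move=> s hs; rewrite hu.
Qed.

Lemma traj_on_le T T' x u y : (T' <= T)%N -> traj_on A B C D T x u y ->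
  traj_on A B C D T' x u y.
Proof. by move=> hT h k hk; apply: h; lia. Qed.

(* Conversely, trajectories on the windows whose inputs and outputs are those
   of (ubar, ybar) glue into a trajectory: by observability, consecutive windows
   agree on the state at the start of their overlap of length n. *)
Lemma glue_windows (ho : \rank (obsv A C) = n) xw uw yw ubar ybar :
  (forall i, (i < xi)%N -> traj_on A B C D L (xw i) (uw i) (yw i)) ->
  (forall i t, (i < xi)%N -> (t < L)%N ->
     uw i t = ubar (start i + t)%N /\ yw i t = ybar (start i + t)%N) ->
  is_trajectory A B C D (L + (xi - 1) * (L - n)) ubar ybar.
Proof.
move=> hw hio.
pose xb := fix xb k := if k is k'.+1 then A *m xb k' + B *m ubar k' else xw 0%N 0%N.
have hxb (T : nat) : state_eq A B T xb ubar by [].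
have states i : (i < xi)%N -> forall t, (t <= L)%N -> xw i t = xb (start i + t)%N.
  elim: i => [|i IH] hi.
    apply: (state_determined (traj_on_state (hw 0%N hi)) (hxb L)) => // t ht.
    by rewrite (hio 0%N t hi ht).1.
  have hov : (L - n + n <= L)%N by lia.
  have overlap : xw i.+1 0%N = xw i (L - n + 0)%N.
    apply: (traj_observed ho (traj_on_le hnL (hw _ hi))
                             (traj_on_shift hov (hw i (ltnW hi)))) => t ht /=.
    - rewrite (hio _ _ (ltnW hi) _).1 ?(hio _ _ hi _).1; try lia.
      by rewrite mulSn; congr ubar; lia.
    - rewrite (hio _ _ (ltnW hi) _).2 ?(hio _ _ hi _).2; try lia.
      by rewrite mulSn; congr ybar; lia.
  have h0 : xw i.+1 0%N = xb (start i.+1).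
    by rewrite overlap IH ?(ltnW hi) 1?mulSn; [congr xb | ..]; lia.
  have hxs : state_eq A B L (fun k => xb (start i.+1 + k)%N)
                            (fun k => ubar (start i.+1 + k)%N).
    by move=> k _; rewrite addnS.
  apply: (state_determined (traj_on_state (hw _ hi)) hxs) => [|t ht].
    by rewrite addn0.
  by rewrite (hio _ _ hi ht).1.
exists xb => k hk; split => //.
have [i [t [hi ht ->]]] := cover_index hnL hxi hk.
have [hu hy] := hio i t hi ht.
by rewrite -hu -hy -states ?(ltnW ht) //; exact: ((hw i hi) t ht).2.
Qed.

End Windows.

Section DataWindows.
Variables (R : fieldType) (n m p N L xi : nat) (A : 'M[R]_n) (B : 'M[R]_(n, m))
  (C : 'M[R]_(p, n)) (D : 'M[R]_(p, m))
  (x : nat -> 'cV[R]_n) (u : nat -> 'cV[R]_m) (y : nat -> 'cV[R]_p).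
Hypotheses (hc : \rank (ctrb A B) = n) (ho : \rank (obsv A C) = n)
  (hnL : (n <= L)%N) (hxi : (1 <= xi)%N) (hN : (L + n <= N)%N)
  (htraj : traj_on A B C D N x u y) (hpe : persistently_exciting u N (L + n)).

Lemma trajectory_windowsP ubar ybar :
  is_trajectory A B C D (L + (xi - 1) * (L - n)) ubar ybar <->
  exists alpha : nat -> 'cV[R]_(N - L + 1),
    forall i t, (i < xi)%N -> (t < L)%N ->
      comb u (alpha i) t = ubar (i * (L - n) + t)%N /\
      comb y (alpha i) t = ybar (i * (L - n) + t)%N.
Proof.
have hK : (N - L + 1 + L <= N.+1)%N by lia.
have windows (al : 'cV[R]_(N - L + 1)) := comb_traj al hK htraj.
split; last first.
  by case=> alpha hal; apply: (glue_windows hnL hxi ho (fun i _ => windows (alpha i))).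
case=> xb hb.
pose alpha i := window_coef N L x u (xb (i * (L - n))%N) (fun t => ubar (i * (L - n) + t)%N).
have fit i := window_coefP (traj_on_state htraj) hc hN hpe
  (xb (i * (L - n))%N) (fun t => ubar (i * (L - n) + t)%N).
exists alpha => i t hi ht; split; first exact: (fit i).2.
apply: (window_outputs hnL hxi hb (fun i _ => windows (alpha i))) => // j.
- by move=> _; exact: (fit j).1.
- by move=> s _ hs; exact: (fit j).2.
Qed.

End DataWindows.

Theorem proposition1 (R : realFieldType) (n m p : nat)
  (A : 'M[R]_n) (B : 'M[R]_(n, m)) (C : 'M[R]_(p, n)) (D : 'M[R]_(p, m))
  (hmin : minimal_realization A B C D)
  (N L xi : nat) (hLn : (n <= L)%N) (hxi : (1 <= xi)%N) (hN : (L + n <= N)%N)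
  (u : nat -> 'cV[R]_m) (y : nat -> 'cV[R]_p)
  (htraj : is_trajectory A B C D N u y)
  (hpe : persistently_exciting u N (L + n))
  (ubar : nat -> 'cV[R]_m) (ybar : nat -> 'cV[R]_p) :
  let Lt := (L + (xi - 1) * (L - n))%N in
  let K := (N - L + 1)%N in
  is_trajectory A B C D Lt ubar ybar <->
  exists alpha : nat -> 'cV[R]_K,
    [/\ hankel u L K *m alpha 0%N = stackv ubar 0 L,
        hankel y L K *m alpha 0%N = stackv ybar 0 L,
        (forall i, (1 <= i < xi)%N ->
           hankel (fun k => u (n + k)%N) (L - n) K *m alpha i
             = stackv ubar (L + (i - 1) * (L - n)) (L - n)
        /\ hankel (fun k => y (n + k)%N) (L - n) K *m alpha i
             = stackv ybar (L + (i - 1) * (L - n)) (L - n)) &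
        (forall i, (i.+1 < xi)%N ->
           hankel (fun k => u (L - n + k)%N) n K *m alpha i
             = hankel u n K *m alpha i.+1
        /\ hankel (fun k => y (L - n + k)%N) n K *m alpha i
             = hankel y n K *m alpha i.+1)].
Proof.
move=> Lt K; have [hc ho] := hmin; have [x hx] := htraj.
rewrite (trajectory_windowsP hc ho hLn hxi hN hx hpe).
split=> -[alpha hal]; exists alpha.
  have /(hankel_windowsP _ _ _ hLn hxi) [hu0 hu1 hu2] :=
    fun i t hi ht => (hal i t hi ht).1.
  have /(hankel_windowsP _ _ _ hLn hxi) [hy0 hy1 hy2] :=
    fun i t hi ht => (hal i t hi ht).2.
  by split=> // i hi; split; [apply: hu1 | apply: hy1 | apply: hu2 | apply: hy2].
case: hal => hu0 hy0 h1 h2.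
have /(hankel_windowsP _ _ _ hLn hxi) hu : [/\ _, _ & _] :=
  And3 hu0 (fun i hi => (h1 i hi).1) (fun i hi => (h2 i hi).1).
have /(hankel_windowsP _ _ _ hLn hxi) hy : [/\ _, _ & _] :=
  And3 hy0 (fun i hi => (h1 i hi).2) (fun i hi => (h2 i hi).2).
by move=> i t hi ht; split; [apply: hu | apply: hy].
Qed.
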